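(* Let $N\ge1$, $0<\alpha\le2$, $Y_0\in\mathrm{Herm}(N)$ and $\Sigma$ an $N^2\times N^2$ Hermitian positive definite matrix, and let $Y\in\mathrm{Herm}(N)$ be a random matrix with characteristic function $$\mathbb E[\exp(i\mathrm{Tr}\,YS)]=\exp\Big[-\Big(\sum_{a,b,c,d=1}^N\Sigma_{ab,cd}S_{ab}S_{cd}^*\Big)^{\alpha/2}+i\mathrm{Tr}\,Y_0S\Big],\quad S\in\mathrm{Herm}(N).$$ Assume $Y$ is invariant, i.e. $UYU^\dagger\overset d=Y$ for all $U\in\mathrm U(N)$. Then there are constants $\sigma>0$ and $\kappa>-\sigma^2/N$ such that $\Sigma_{ab,cd}=\frac{\sigma^2}{\alpha}\delta_{ac}\delta_{bd}+\frac{\kappa}{\alpha}\delta_{ab}\delta_{cd}$, equivalently $\sum_{a,b,c,d}\Sigma_{ab,cd}S_{ab}S^*_{cd}=\sigma^2\mathrm{Tr}\,S^2/\alpha+\kappa(\mathrm{Tr}\,S)^2/\alpha$, and $Y_0=y_0I_N$ for some $y_0\in\mathbb R$.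
   Context: $\mathrm{Herm}(N)$: $N\times N$ Hermitian matrices; $\delta$ is the Kronecker delta; $S^*_{cd}$ is the complex conjugate of $S_{cd}$. *)

From HB Require Import structures.
From mathcomp Require Import all_boot all_order all_algebra.
From mathcomp Require Import all_classical all_reals all_analysis.
From mathcomp Require Import complex.

Set Implicit Arguments.
Unset Strict Implicit.
Unset Printing Implicit Defensive.

Import Order.TTheory GRing.Theory Num.Theory.
Local Open Scope ring_scope.
Local Open Scope classical_set_scope.
Local Open Scope complex_scope.

Section Defs.
Variable R : realType.
Local Notation C := (R[i]).

Definition adjmx m n (M : 'M[C]_(m, n)) : 'M[C]_(n, m) := (map_mx (@conjc R) M)^T.

Definition herm_mx n (M : 'M[C]_n) : Prop := adjmx M = M.

Definition unitary_mx n (U : 'M[C]_n) : Prop := U *m adjmx U = 1%:M.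

(* Hermitian positive definite (complex order: 0 < z forces z real) *)
Definition herm_posdef n (A : 'M[C]_n) : Prop :=
  herm_mx A /\ forall v : 'cV[C]_n, v != 0 -> 0 < (adjmx v *m A *m v) 0 0.

(* Borel sigma-algebra on N x N complex matrices, i.e. on R^(2N^2):
   generated by the real and imaginary parts of the entries. *)
Definition entry_sets N : set (set 'M[C]_N) :=
  [set A | exists (i j : 'I_N) (B : set R), measurable B /\
      (A = [set M : 'M[C]_N | B (complex.Re (M i j))] \/ A = [set M : 'M[C]_N | B (complex.Im (M i j))])].

Definition mx_measurable N (A : set 'M[C]_N) : Prop := <<s (@entry_sets N) >> A.

Definition random_matrix d (Omega : measurableType d) N
  (Y : Omega -> 'M[C]_N) : Prop :=
  forall A, mx_measurable A -> measurable (Y @^-1` A).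

Definition eq_in_law d (Omega : measurableType d) (P : probability Omega R) N
  (Y Z : Omega -> 'M[C]_N) : Prop :=
  forall A, mx_measurable A -> P (Y @^-1` A) = P (Z @^-1` A).

(* characteristic function E[exp(i Tr(Y S))], for Hermitian-valued Y and
   Hermitian S (then Tr(Y S) is real) *)
Definition charfun d (Omega : measurableType d) (P : probability Omega R) N
  (Y : Omega -> 'M[C]_N) (S : 'M[C]_N) : C :=
  (Rintegral P setT (fun w => cos (complex.Re (\tr (Y w *m S)))))
  +i* (Rintegral P setT (fun w => sin (complex.Re (\tr (Y w *m S))))).

Definition sigma_form N (Sigma : 'M[C]_(N * N)) (S : 'M[C]_N) : C :=
  \sum_(a < N) \sum_(b < N) \sum_(c < N) \sum_(d < N)
     Sigma (mxvec_index a b) (mxvec_index c d) * S a b * conjc (S c d).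

(* exp[-(Q)^(alpha/2) + i Tr(Y0 S)] ; Q and Tr(Y0 S) are real for Hermitian S *)
Definition stable_charfun N (alpha : R) (Sigma : 'M[C]_(N * N)) (Y0 S : 'M[C]_N) : C :=
  let r := expR (- ((complex.Re (sigma_form Sigma S)) `^ (alpha / 2))) in
  let t := complex.Re (\tr (Y0 *m S)) in
  (r * cos t) +i* (r * sin t).

End Defs.

(* Idea: a characteristic function determines its exponent, so unitary
   invariance in law makes both Q(S) = sum Sigma_{ab,cd} S_ab S_cd^* and
   Tr (Y0 S) invariant under S |-> U^* S U; the dilations S |-> l S separate
   the two terms (the modulus gives Q, the phase gives Tr (Y0 S)).
   Invariance of Tr (Y0 S) makes Y0 commute with every unitary, so Y0 is
   scalar (sign flips and transpositions already suffice).  By the spectral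
   theorem Q is determined by its values on real diagonal matrices, where it
   is a permutation-invariant positive definite quadratic form, hence of the
   form p sum_a x_a^2 + r (sum_a x_a)^2 with p > 0 and p + N r > 0; that is,
   Q(S) = p Tr S^2 + r (Tr S)^2. *)

From HB Require Import structures.
From mathcomp Require Import all_boot all_order all_algebra.
From mathcomp Require Import all_classical all_reals all_analysis.
From mathcomp Require Import complex.
From mathcomp Require Import measurable_realfun.
From mathcomp Require Import ring lra.
From mathcomp Require Import fingroup perm.

Set Implicit Arguments.
Unset Strict Implicit.
Unset Printing Implicit Defensive.

Import Order.TTheory GRing.Theory Num.Theory.
Import numFieldNormedType.Exports.
Local Open Scope ring_scope.
Local Open Scope classical_set_scope.
Local Open Scope complex_scope.

Local Notation Re := complex.Re.
Local Notation Im := complex.Im.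

Section ComplexParts.
Variable R : realType.
Local Notation C := (R[i]).
Implicit Types x y z : C.

Lemma Re_mul x y : Re (x * y) = Re x * Re y - Im x * Im y.
Proof. by case: x => ? ?; case: y. Qed.

Lemma Im_mul x y : Im (x * y) = Re x * Im y + Im x * Re y.
Proof. by case: x => ? ?; case: y. Qed.

Lemma Re_sub x y : Re (x - y) = Re x - Re y.
Proof. by case: x => ? ?; case: y. Qed.

Lemma Re_sum I (r : seq I) (P : pred I) (F : I -> C) :
  Re (\sum_(i <- r | P i) F i) = \sum_(i <- r | P i) Re (F i).
Proof. by elim/big_rec2: _ => // i y1 y2 _ <-; case: (F i); case: y2. Qed.

Lemma Im_sum I (r : seq I) (P : pred I) (F : I -> C) :
  Im (\sum_(i <- r | P i) F i) = \sum_(i <- r | P i) Im (F i).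
Proof. by elim/big_rec2: _ => // i y1 y2 _ <-; case: (F i); case: y2. Qed.

Lemma Re_realCM (r : R) z : Re (r%:C * z) = r * Re z.
Proof. by case: z => ? ? /=; rewrite mul0r subr0. Qed.

Lemma Re_mulcJ z : Re (z * conjc z) = Re z ^+ 2 + Im z ^+ 2.
Proof. by case: z => ? ? /=; rewrite mulrN opprK !expr2. Qed.

End ComplexParts.

Section Adjoint.
Variable R : realType.
Local Notation C := (R[i]).

Lemma adjmxM m n p (A : 'M[C]_(m, n)) (B : 'M[C]_(n, p)) :
  adjmx (A *m B) = adjmx B *m adjmx A.
Proof. by rewrite /adjmx map_mxM trmx_mul. Qed.

Lemma adjmxK m n (A : 'M[C]_(m, n)) : adjmx (adjmx A) = A.
Proof. by apply/matrixP => i j; rewrite /adjmx !mxE conjcK. Qed.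

Lemma adjmxB m n (A B : 'M[C]_(m, n)) : adjmx (A - B) = adjmx A - adjmx B.
Proof. by apply/matrixP => i j; rewrite /adjmx !mxE rmorphB. Qed.

Lemma adjmx_realZ m n (l : R) (A : 'M[C]_(m, n)) : adjmx (l%:C *: A) = l%:C *: adjmx A.
Proof. by apply/matrixP => i j; rewrite /adjmx !mxE rmorphM /= oppr0. Qed.

Lemma herm_mx_entry n (A : 'M[C]_n) i j : herm_mx A -> A i j = conjc (A j i).
Proof. by move=> hA; rewrite -{1}hA /adjmx !mxE. Qed.

Lemma herm_mxB n (A B : 'M[C]_n) : herm_mx A -> herm_mx B -> herm_mx (A - B).
Proof. by move=> hA hB; rewrite /herm_mx adjmxB hA hB. Qed.

Lemma herm_mx_realZ n (l : R) (A : 'M[C]_n) : herm_mx A -> herm_mx (l%:C *: A).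
Proof. by move=> hA; rewrite /herm_mx adjmx_realZ hA. Qed.

Lemma herm_mx_conj m n (U : 'M[C]_(m, n)) (A : 'M[C]_m) :
  herm_mx A -> herm_mx (adjmx U *m A *m U).
Proof. by move=> hA; rewrite /herm_mx !adjmxM adjmxK hA mulmxA. Qed.

Lemma unitary_mx_adjl n (U : 'M[C]_n) : unitary_mx U -> adjmx U *m U = 1%:M.
Proof. exact: mulmx1C. Qed.

Lemma unitary_mx_adj n (U : 'M[C]_n) : unitary_mx U -> unitary_mx (adjmx U).
Proof. by move=> hU; rewrite /unitary_mx adjmxK unitary_mx_adjl. Qed.

Lemma unitary_perm_mx n (s : 'S_n) : unitary_mx (perm_mx s : 'M[C]_n).
Proof.
by rewrite /unitary_mx /adjmx map_perm_mx tr_perm_mx -perm_mxM mulgV perm_mx1.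
Qed.

Lemma conj_perm_mx n (s : 'S_n) (A : 'M[C]_n) :
  perm_mx s *m A *m adjmx (perm_mx s) = \matrix_(a, b) A (s a) (s b).
Proof.
rewrite /adjmx map_perm_mx tr_perm_mx -row_permE -col_permE.
by apply/matrixP => a b; rewrite !mxE.
Qed.

Definition sign_flip_mx n (k : 'I_n) : 'M[C]_n :=
  diag_mx (\row_i (if i == k then -1 else 1)).

Lemma adjmx_sign_flip n (k : 'I_n) : adjmx (sign_flip_mx k) = sign_flip_mx k.
Proof.
rewrite /adjmx map_diag_mx tr_diag_mx; congr diag_mx; apply/rowP => i.
by rewrite !mxE; case: ifP; rewrite ?rmorphN rmorph1.
Qed.

Lemma unitary_sign_flip n (k : 'I_n) : unitary_mx (sign_flip_mx k).
Proof.
rewrite /unitary_mx adjmx_sign_flip mulmx_diag; apply/matrixP => i j.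
by rewrite !mxE; case: ifP; rewrite ?mulrNN mulr1.
Qed.

Lemma conj_sign_flip_offdiag n (k j : 'I_n) (A : 'M[C]_n) : j != k ->
  (sign_flip_mx k *m A *m adjmx (sign_flip_mx k)) k j = - A k j.
Proof.
move=> /negbTE jk.
by rewrite adjmx_sign_flip mul_mx_diag mxE mul_diag_mx !mxE eqxx jk mulr1 mulN1r.
Qed.

Lemma unitary_invariant_scalar n (A : 'M[C]_n) :
  (forall U, unitary_mx U -> U *m A *m adjmx U = A) -> exists a, A = a%:M.
Proof.
case: n A => [|n] A inv; first by exists 0; apply/matrixP => -[].
exists (A 0 0); apply/matrixP => i j; rewrite !mxE.
have [<-|ji] := eqVneq j i; last first.
  have := congr1 (fun M : 'M[C]_n.+1 => M i j) (inv _ (unitary_sign_flip i)).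
  rewrite /= conj_sign_flip_offdiag // => /eqP.
  by rewrite eq_sym -subr_eq0 opprK -mulr2n mulrn_eq0 /= => /eqP ->; rewrite mulr0n.
have := congr1 (fun M : 'M[C]_n.+1 => M 0 0) (inv _ (unitary_perm_mx (tperm 0 j))).
by rewrite conj_perm_mx mxE tpermL mulr1n => ->.
Qed.

Lemma herm_scalar_mx_real n (a : C) :
  (0 < n)%N -> herm_mx (a%:M : 'M[C]_n) -> a = (Re a)%:C.
Proof.
case: n => // n _ /(congr1 (fun M : 'M[C]_n.+1 => M 0 0)); rewrite /adjmx !mxE eqxx.
case: a => x y /= [] /eqP; rewrite eqr_oppLR -subr_eq0 opprK -mulr2n mulrn_eq0 /=.
by move=> /eqP ->.
Qed.

End Adjoint.

Section HermitianTrace.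
Variable R : realType.
Local Notation C := (R[i]).
Variable n : nat.
Implicit Types A S U : 'M[C]_n.

Lemma Re_trace_herm_sqr A : herm_mx A ->
  Re (\tr (A *m A)) = \sum_i \sum_j (Re (A i j) ^+ 2 + Im (A i j) ^+ 2).
Proof.
move=> hA; rewrite /mxtrace Re_sum; apply: eq_bigr => i _.
rewrite mxE Re_sum; apply: eq_bigr => j _.
by rewrite [A j i](herm_mx_entry j i hA) Re_mulcJ.
Qed.

Lemma herm_trace_sqr_eq0 A : herm_mx A -> Re (\tr (A *m A)) = 0 -> A = 0.
Proof.
move=> hA; rewrite Re_trace_herm_sqr // => sum0; apply/matrixP => i j.
have ge0 (z : C) : 0 <= Re z ^+ 2 + Im z ^+ 2 by rewrite addr_ge0 ?sqr_ge0.
move/psumr_eq0P: sum0 => /(_ (fun i _ => sumr_ge0 _ (fun j _ => ge0 (A i j))) i isT).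
move/psumr_eq0P => /(_ (fun j _ => ge0 (A i j)) j isT) /eqP.
rewrite paddr_eq0 ?sqr_ge0 // !sqrf_eq0 mxE.
by case: (A i j) => x y /= /andP[/eqP -> /eqP ->].
Qed.

Lemma trace_invariant_unitary_commute A : herm_mx A ->
  (forall U S, unitary_mx U -> herm_mx S ->
     Re (\tr (A *m (adjmx U *m S *m U))) = Re (\tr (A *m S))) ->
  forall U, unitary_mx U -> U *m A *m adjmx U = A.
Proof.
move=> hA inv U hU; apply/eqP; rewrite -subr_eq0; apply/eqP.
(* the Hermitian difference is trace-orthogonal to every Hermitian matrix,
   in particular to itself *)
have hD : herm_mx (U *m A *m adjmx U - A).
  by apply: herm_mxB => //; rewrite -{1}[U]adjmxK; apply: herm_mx_conj.
apply: herm_trace_sqr_eq0 => //.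
rewrite mulmxBl linearB Re_sub -(inv U _ hU hD).
by rewrite -!mulmxA [X in Re X - _]mxtrace_mulC !mulmxA subrr.
Qed.

Lemma trace_invariant_herm_scalar A : (0 < n)%N -> herm_mx A ->
  (forall U S, unitary_mx U -> herm_mx S ->
     Re (\tr (A *m (adjmx U *m S *m U))) = Re (\tr (A *m S))) ->
  exists y : R, A = (y%:C)%:M.
Proof.
move=> n0 hA inv.
have [a Aa] := unitary_invariant_scalar (trace_invariant_unitary_commute hA inv).
by exists (Re a); rewrite -(herm_scalar_mx_real n0) -?Aa.
Qed.

End HermitianTrace.

Section RealDiagonal.
Variables (R : realType) (N : nat).
Local Notation C := (R[i]).
Implicit Types x : 'rV[R]_N.

Definition diag_real_mx x : 'M[C]_N := diag_mx (map_mx (real_complex R) x).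

Lemma herm_diag_real_mx x : herm_mx (diag_real_mx x).
Proof.
apply/matrixP => i j; rewrite /adjmx !mxE.
by have [<-|ij] := eqVneq i j; rewrite ?mulr1n ?mulr0n ?conjc_real ?rmorph0.
Qed.

Lemma diag_real_mx_eq0 x : (diag_real_mx x == 0) = (x == 0).
Proof.
apply/eqP/eqP => [D0|->]; last by apply/matrixP => i j; rewrite !mxE mul0rn.
apply/rowP => i; have := congr1 (fun M : 'M[C]_N => M i i) D0.
by rewrite !mxE eqxx mulr1n => -[].
Qed.

Lemma conj_perm_diag_real_mx x (s : 'S_N) :
  perm_mx s *m diag_real_mx x *m adjmx (perm_mx s) = diag_real_mx (col_perm s x).
Proof. by rewrite conj_perm_mx; apply/matrixP => a b; rewrite !mxE (inj_eq perm_inj). Qed.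

End RealDiagonal.

Section Spectral.
Local Open Scope sesquilinear_scope.
Variable R : realType.
Local Notation C := (R[i]).

Lemma adjmxE m n (A : 'M[C]_(m, n)) : adjmx A = A ^t*.
Proof. by rewrite /adjmx map_trmx. Qed.

Lemma herm_mx_unitary_diag n (S : 'M[C]_n) : herm_mx S ->
  exists (U : 'M[C]_n) (x : 'rV[R]_n), [/\ unitary_mx U,
    adjmx U *m S *m U = diag_real_mx x,
    \tr (S *m S) = \sum_a ((x 0 a) ^+ 2)%:C &
    \tr S = \sum_a (x 0 a)%:C].
Proof.
move=> hS.
have hs : S \is hermsymmx.
  by apply/is_hermitianmxP; rewrite expr0 scale1r -map_trmx -[in LHS]hS.
have /orthomx_spectralP E := hermitian_normalmx hs.
have rl := hermitian_spectral_diag_real hs.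
set P := spectralmx S in E; set sp := spectral_diag S in E rl.
have uP : P \is unitarymx by exact: spectral_unitarymx.
have Pu : P \in unitmx by exact: unitarymx_unit.
pose x := map_mx (@complex.Re R) sp.
have Ex : map_mx (real_complex R) x = sp.
  by apply/rowP => j; rewrite !mxE; apply: RRe_real; move/mxOverP: rl => /(_ 0 j).
exists (adjmx P), x; rewrite /diag_real_mx Ex adjmxK; split.
- by apply: unitary_mx_adj; move/unitarymxP: uP; rewrite /unitary_mx adjmxE.
- rewrite adjmxE -invmx_unitary // E !mulmxA mulmxV // mul1mx -mulmxA mulmxV //.
  by rewrite mulmx1.
- rewrite E !mulmxA -[_ *m P *m invmx P]mulmxA mulmxV // mulmx1.
  rewrite -!mulmxA mxtrace_mulC -!mulmxA mulmxV // mulmx1 mulmx_diag.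
  rewrite /mxtrace; apply: eq_bigr => a _; rewrite !mxE eqxx mulr1n -Ex !mxE.
  by rewrite rmorphXn /= expr2.
- rewrite E -mulmxA mxtrace_mulC -mulmxA mulmxV // mulmx1.
  by rewrite /mxtrace; apply: eq_bigr => a _; rewrite !mxE eqxx mulr1n -Ex !mxE.
Qed.

End Spectral.

Section PermInvariantForm.
Variables (R : realFieldType) (n : nat) (M : 'M[R]_n).
Implicit Types x y z : 'rV[R]_n.

Definition bform x y := \sum_a \sum_c M a c * x 0 a * y 0 c.

Lemma bformDl x y z : bform (x + y) z = bform x z + bform y z.
Proof.
rewrite /bform -big_split; apply: eq_bigr => a _; rewrite -big_split.
by apply: eq_bigr => c _; rewrite !mxE /=; ring.
Qed.

Lemma bformDr x y z : bform z (x + y) = bform z x + bform z y.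
Proof.
rewrite /bform -big_split; apply: eq_bigr => a _; rewrite -big_split.
by apply: eq_bigr => c _; rewrite !mxE /=; ring.
Qed.

Lemma bformNl x z : bform (- x) z = - bform x z.
Proof.
rewrite /bform -sumrN; apply: eq_bigr => a _; rewrite -sumrN.
by apply: eq_bigr => c _; rewrite !mxE /=; ring.
Qed.

Lemma bformNr x z : bform z (- x) = - bform z x.
Proof.
rewrite /bform -sumrN; apply: eq_bigr => a _; rewrite -sumrN.
by apply: eq_bigr => c _; rewrite !mxE /=; ring.
Qed.

Lemma bform_delta (a c : 'I_n) : bform (delta_mx 0 a) (delta_mx 0 c) = M a c.
Proof.
rewrite /bform (bigD1 a) //= [X in _ + X]big1 => [|b ba]; last first.
  by rewrite big1 // => d _; rewrite !mxE (negbTE ba) mulr0 mul0r.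
rewrite addr0 (bigD1 c) //= [X in _ + X]big1 => [|d dc]; last first.
  by rewrite !mxE (negbTE dc) mulr0.
by rewrite addr0 !mxE !eqxx !mulr1.
Qed.

Lemma delta_mx_neq0 (a : 'I_n) : delta_mx 0 a != 0 :> 'rV[R]_n.
Proof. by apply/eqP => /rowP /(_ a); rewrite !mxE !eqxx => /eqP; rewrite oner_eq0. Qed.

Lemma bform_sym_coef p r :
  (forall a c, M a c + M c a = 2 * (r + p * (a == c)%:R)) ->
  forall x, bform x x = p * \sum_a x 0 a ^+ 2 + r * (\sum_a x 0 a) ^+ 2.
Proof.
move=> coef x; apply: (@mulfI _ 2); first by rewrite pnatr_eq0.
have -> : 2 * bform x x = \sum_a \sum_c (M a c + M c a) * x 0 a * x 0 c.
  rewrite mulr_natl mulr2n {2}/bform exchange_big /= /bform -big_split.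
  apply: eq_bigr => a _; rewrite -big_split; apply: eq_bigr => c _ /=; ring.
under eq_bigr do under eq_bigr do rewrite coef.
have -> : (\sum_a x 0 a) ^+ 2 = \sum_a \sum_c x 0 a * x 0 c.
  by rewrite expr2 mulr_suml; apply: eq_bigr => a _; rewrite mulr_sumr.
have -> : \sum_a x 0 a ^+ 2 = \sum_a \sum_c (a == c)%:R * x 0 a * x 0 c.
  apply: eq_bigr => a _; rewrite (bigD1 a) //= big1 ?addr0 => [|c ca].
    by rewrite eqxx mul1r expr2.
  by rewrite eq_sym (negbTE ca) !mul0r.
rewrite !mulr_sumr -big_split !mulr_sumr; apply: eq_bigr => a _.
rewrite !mulr_sumr -big_split !mulr_sumr; apply: eq_bigr => c _ /=; ring.
Qed.

Lemma col_perm_delta (s : 'S_n) (a : 'I_n) :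
  col_perm s (delta_mx 0 (s a)) = delta_mx 0 a :> 'rV[R]_n.
Proof. by apply/matrixP => i j; rewrite !mxE (inj_eq perm_inj). Qed.

Lemma perm_two_points (a c a' c' : 'I_n) : a != c -> a' != c' ->
  exists s : 'S_n, s a' = a /\ s c' = c.
Proof.
move=> ac a'c'; exists (tperm a' a * tperm (tperm a' a c') c)%g.
rewrite !permM tpermL; split; last exact: tpermL.
apply: tpermD; last by rewrite eq_sym.
by rewrite -[X in _ != X](tpermL a' a) (inj_eq perm_inj) eq_sym.
Qed.

Hypothesis bform_perm : forall x (s : 'S_n), bform (col_perm s x) (col_perm s x) = bform x x.

Lemma perm_invariant_diag a b : M a a = M b b.
Proof.
have := bform_perm (delta_mx 0 (tperm a b a)) (tperm a b).
by rewrite col_perm_delta tpermL !bform_delta.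
Qed.

Lemma perm_invariant_offdiag a c a' c' : a != c -> a' != c' ->
  M a c + M c a = M a' c' + M c' a'.
Proof.
move=> ac a'c'; have [s [sa sc]] := perm_two_points ac a'c'.
have := bform_perm (delta_mx 0 (s a') + delta_mx 0 (s c')) s.
rewrite linearD /= !col_perm_delta sa sc !bformDl !bformDr !bform_delta.
by rewrite (perm_invariant_diag a a') (perm_invariant_diag c c'); lra.
Qed.

Lemma perm_invariant_sym_coef : (0 < n)%N -> (forall x, x != 0 -> 0 < bform x x) ->
  exists p r, 0 < p /\ forall a c, M a c + M c a = 2 * (r + p * (a == c)%:R).
Proof.
move=> n0 bform_pos; pose a0 := Ordinal n0.
have [n1|n1] := ltnP 1 n.
- pose a1 := Ordinal n1; have a01 : a0 != a1 by [].
  pose r := (M a0 a1 + M a1 a0) / 2.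
  exists (M a0 a0 - r), r; split.
    have : delta_mx 0 a0 - delta_mx 0 a1 != 0 :> 'rV[R]_n.
      apply/eqP => /rowP /(_ a0); rewrite !mxE eqxx (negbTE a01) subr0.
      by move/eqP; rewrite oner_eq0.
    move/bform_pos; rewrite bformDl !bformDr !bformNl !bformNr !bform_delta.
    by rewrite (perm_invariant_diag a1 a0) /r; lra.
  move=> a c; have [<-|ac] := eqVneq a c.
    by rewrite mulr1 (perm_invariant_diag a a0); lra.
  by rewrite mulr0 addr0 (perm_invariant_offdiag ac a01) /r; lra.
- exists (M a0 a0), 0; split; first by rewrite -bform_delta bform_pos ?delta_mx_neq0.
  have val0 (b : 'I_n) : val b = 0%N.
    by move: (leq_trans (ltn_ord b) n1); rewrite ltnS leqn0 => /eqP.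
  move=> a c; have -> : a = c by apply: val_inj; rewrite /= !val0.
  by rewrite eqxx mulr1 (perm_invariant_diag c a0); lra.
Qed.

Lemma perm_invariant_posdef_bform : (0 < n)%N -> (forall x, x != 0 -> 0 < bform x x) ->
  exists p r, [/\ 0 < p, 0 < p + n%:R * r &
    forall x, bform x x = p * \sum_a x 0 a ^+ 2 + r * (\sum_a x 0 a) ^+ 2].
Proof.
move=> n0 bform_pos; have [p [r [p0 coef]]] := perm_invariant_sym_coef n0 bform_pos.
exists p, r; split => //; last exact: bform_sym_coef.
have : const_mx 1 != 0 :> 'rV[R]_n.
  by apply/eqP => /rowP /(_ (Ordinal n0)); rewrite !mxE => /eqP; rewrite oner_eq0.
move/bform_pos; rewrite (bform_sym_coef coef).
under eq_bigr do rewrite mxE expr1n.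
under [X in _ + _ * X ^+ 2]eq_bigr do rewrite mxE.
rewrite sumr_const card_ord -[_ *+ n]mulr_natl mulr1.
have -> : p * n%:R + r * n%:R ^+ 2 = n%:R * (p + n%:R * r) by ring.
by rewrite pmulr_rgt0 // ltr0n.
Qed.

End PermInvariantForm.

Section SigmaForm.
Variables (R : realType) (N : nat) (Sigma : 'M[R[i]]_(N * N)).
Local Notation C := (R[i]).
Implicit Types (S : 'M[C]_N) (x : 'rV[R]_N).

Lemma sum_mxvec_index (F : 'I_(N * N) -> C) :
  \sum_k F k = \sum_a \sum_b F (mxvec_index a b).
Proof.
rewrite (reindex _ (curry_mxvec_bij N N)) /= pair_big /=.
by apply: eq_bigr => -[a b] _.
Qed.

Lemma sigma_form_quad S (w := (mxvec (map_mx conjc S))^T) :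
  sigma_form Sigma S = (adjmx w *m Sigma *m w) 0 0.
Proof.
have -> : (adjmx w *m Sigma *m w) 0 0 = \sum_k \sum_l Sigma k l * conjc (w k 0) * w l 0.
  rewrite mxE exchange_big /=; apply: eq_bigr => l _.
  rewrite mxE mulr_suml; apply: eq_bigr => k _.
  by rewrite /adjmx !mxE (mulrC _ (Sigma k l)).
rewrite sum_mxvec_index; apply: eq_bigr => a _; apply: eq_bigr => b _.
rewrite sum_mxvec_index; apply: eq_bigr => c _; apply: eq_bigr => d _.
by rewrite {}/w !mxE !mxvecE !mxE conjcK.
Qed.

Lemma sigma_formZ (l : R) S :
  sigma_form Sigma (l%:C *: S) = (l ^+ 2)%:C * sigma_form Sigma S.
Proof.
rewrite /sigma_form mulr_sumr; apply: eq_bigr => a _.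
rewrite mulr_sumr; apply: eq_bigr => b _.
rewrite mulr_sumr; apply: eq_bigr => c _.
rewrite mulr_sumr; apply: eq_bigr => d _.
by rewrite !mxE rmorphM /= oppr0 -[l +i* 0]/(l%:C) rmorphXn /=; ring.
Qed.

Definition sigma_diag : 'M[R]_N :=
  \matrix_(a, c) Re (Sigma (mxvec_index a a) (mxvec_index c c)).

Lemma Re_sigma_form_diag x :
  Re (sigma_form Sigma (diag_real_mx x)) = bform sigma_diag x x.
Proof.
rewrite /sigma_form Re_sum; apply: eq_bigr => a _.
rewrite (bigD1 a) //= [X in _ + X]big1 => [|b ba]; last first.
  rewrite eq_sym in ba; rewrite big1 // => c _; rewrite big1 // => d _.
  by rewrite !mxE (negbTE ba) mulr0n mulr0 mul0r.
rewrite addr0 Re_sum; apply: eq_bigr => c _.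
rewrite (bigD1 c) //= [X in _ + X]big1 => [|d dc]; last first.
  by rewrite eq_sym in dc; rewrite !mxE (negbTE dc) mulr0n rmorph0 mulr0.
rewrite addr0 !mxE !eqxx !mulr1n conjc_real -mulrA -rmorphM /= mulrC Re_realCM.
by rewrite mulrC mulrA.
Qed.

Hypothesis Sigma_posdef : herm_posdef Sigma.

Lemma sigma_form_gt0 S : S != 0 -> 0 < sigma_form Sigma S.
Proof.
move=> S0; rewrite sigma_form_quad; apply: Sigma_posdef.2.
apply: contra S0 => /eqP w0; apply/eqP/matrixP => a b.
have := congr1 (fun w : 'cV[C]_(N * N) => w (mxvec_index a b) 0) w0.
by rewrite !mxE mxvecE mxE => /eqP; rewrite conjc_eq0 => /eqP.
Qed.

Lemma sigma_form_ge0 S : 0 <= sigma_form Sigma S.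
Proof.
have [->|S0] := eqVneq S 0; last exact/ltW/sigma_form_gt0.
by have := sigma_formZ 0 0; rewrite scaler0 expr0n /= rmorph0 mul0r => ->.
Qed.

Lemma sigma_form_real S : sigma_form Sigma S = (Re (sigma_form Sigma S))%:C.
Proof. by rewrite RRe_real // ger0_real // sigma_form_ge0. Qed.

Lemma Re_sigma_form_ge0 S : 0 <= Re (sigma_form Sigma S).
Proof. by have := sigma_form_ge0 S; rewrite lecE => /andP[]. Qed.

Lemma Re_sigma_form_gt0 S : S != 0 -> 0 < Re (sigma_form Sigma S).
Proof. by move/sigma_form_gt0; rewrite ltcE => /andP[]. Qed.

Lemma unitary_invariant_sigma_form : (0 < N)%N ->
  (forall U S, unitary_mx U -> herm_mx S ->
     Re (sigma_form Sigma (adjmx U *m S *m U)) = Re (sigma_form Sigma S)) ->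
  exists p r, [/\ 0 < p, 0 < p + N%:R * r &
    forall S, herm_mx S -> sigma_form Sigma S = p%:C * \tr (S *m S) + r%:C * (\tr S) ^+ 2].
Proof.
move=> N0 inv.
have perm x (s : 'S_N) : bform sigma_diag (col_perm s x) (col_perm s x) = bform sigma_diag x x.
  rewrite -!Re_sigma_form_diag -conj_perm_diag_real_mx -{1}[perm_mx s]adjmxK.
  by apply: inv; [exact/unitary_mx_adj/unitary_perm_mx | exact: herm_diag_real_mx].
have pos x : x != 0 -> 0 < bform sigma_diag x x.
  by move=> x0; rewrite -Re_sigma_form_diag Re_sigma_form_gt0 ?diag_real_mx_eq0.
have [p [r [p0 pr form]]] := perm_invariant_posdef_bform perm N0 pos.
exists p, r; split => // S hS.
have [U [x [hU US trSS trS]]] := herm_mx_unitary_diag hS.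
rewrite sigma_form_real // -(inv U S hU hS) US Re_sigma_form_diag.
by rewrite form trSS trS rmorphD !rmorphM /= !rmorph_sum expr2.
Qed.

End SigmaForm.

Section ComplexMeasurable.
Context d (T : measurableType d) (R : realType).

Definition cmeasurable (g : T -> R[i]) :=
  measurable_fun setT (fun t => Re (g t)) /\ measurable_fun setT (fun t => Im (g t)).

Lemma cmeasurable_sum I (r : seq I) (F : I -> T -> R[i]) :
  (forall i, cmeasurable (F i)) -> cmeasurable (fun t => \sum_(i <- r) F i t).
Proof.
move=> mF; split.
- by under eq_fun do rewrite Re_sum; apply: measurable_sum => i; case: (mF i).
- by under eq_fun do rewrite Im_sum; apply: measurable_sum => i; case: (mF i).
Qed.

Lemma cmeasurable_mull c g : cmeasurable g -> cmeasurable (fun t => c * g t).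
Proof.
move=> [mRe mIm]; split.
- under eq_fun do rewrite Re_mul.
  by apply: measurable_funB; apply: measurable_funM => //; exact: measurable_cst.
- under eq_fun do rewrite Im_mul.
  by apply: measurable_funD; apply: measurable_funM => //; exact: measurable_cst.
Qed.

End ComplexMeasurable.

(* A copy of the matrix type carrying the sigma-algebra generated by
   [entry_sets], so that [mx_measurable] is its measurability. *)
Definition cmx (R : realType) N := 'M[R[i]]_N.
HB.instance Definition _ (R : realType) N := Choice.on (cmx R N).
HB.instance Definition _ (R : realType) N := isPointed.Build (cmx R N) 0.
Local Notation cmx_sigma R N := (@g_sigma_algebraType (cmx R N) (@entry_sets R N)).

Section MatrixMeasurable.
Variables (R : realType) (N : nat).
Local Notation C := (R[i]).

Lemma cmeasurable_entry i j : cmeasurable (fun M : cmx_sigma R N => M i j).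
Proof.
split => _ B mB; rewrite setTI; apply: sub_sigma_algebra.
  by exists i, j, B; split => //; left.
by exists i, j, B; split => //; right.
Qed.

Lemma cmeasurable_mulmx_entry (A B : 'M[C]_N) i j :
  cmeasurable (fun M : cmx_sigma R N => (A *m M *m B) i j).
Proof.
have -> : (fun M : cmx_sigma R N => (A *m M *m B) i j) =
    (fun M => \sum_l B l j * \sum_k A i k * M k l).
  by apply: funext => M; rewrite !mxE; apply: eq_bigr => l _; rewrite mxE mulrC.
apply: cmeasurable_sum => l; apply: cmeasurable_mull; apply: cmeasurable_sum => k.
exact/cmeasurable_mull/cmeasurable_entry.
Qed.

Lemma measurable_mulmx (A B : 'M[C]_N) :
  measurable_fun setT (fun M : cmx_sigma R N => A *m M *m B : cmx_sigma R N).
Proof.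
apply: (@measurability _ _ (cmx_sigma R N) (cmx_sigma R N) setT _ (@entry_sets R N)).
  by [].
move=> _ [_ [i [j [E [mE [->|->]]]]] <-]; rewrite setTI;
  have [mRe mIm] := cmeasurable_mulmx_entry A B i j.
- by have := mRe measurableT E mE; rewrite setTI.
- by have := mIm measurableT E mE; rewrite setTI.
Qed.

Lemma measurable_trace_mulmx (S : 'M[C]_N) (h : R -> R) : continuous h ->
  measurable_fun setT (fun M : cmx_sigma R N => h (Re (\tr (M *m S)))).
Proof.
move=> ch; apply: measurableT_comp; first exact: continuous_measurable_fun.
under eq_fun do rewrite -[M in M *m S]mul1mx /mxtrace Re_sum.
by apply: measurable_sum => i; case: (cmeasurable_mulmx_entry 1%:M S i i).
Qed.

End MatrixMeasurable.

Section Law.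
Context d (Omega : measurableType d) (R : realType) (P : probability Omega R) (N : nat).
Local Notation C := (R[i]).
Implicit Types Y Z : Omega -> 'M[C]_N.

Lemma random_matrix_measurable Y :
  random_matrix Y -> measurable_fun setT (Y : Omega -> cmx_sigma R N).
Proof. by move=> rY _ A mA; rewrite setTI; exact: rY. Qed.

Lemma random_matrix_mulmx Y (A B : 'M[C]_N) :
  random_matrix Y -> random_matrix (fun w => A *m Y w *m B).
Proof.
move=> rY E mE; have := measurable_mulmx A B measurableT mE.
by rewrite setTI; exact: rY.
Qed.

Lemma eq_in_law_Rintegral Y Z (f : cmx_sigma R N -> R) :
  random_matrix Y -> random_matrix Z -> eq_in_law P Y Z ->
  measurable_fun setT f -> [bounded f M | M in setT] ->
  Rintegral P setT (fun w => f (Y w)) = Rintegral P setT (fun w => f (Z w)).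
Proof.
move=> rY rZ lawYZ mf [k [k_real fk]].
have mfE : measurable_fun setT (EFin \o f) by apply/measurable_EFinP.
have intf X : random_matrix X ->
    P.-integrable setT (EFin \o (f \o (X : Omega -> cmx_sigma R N))).
  move=> rX; apply: measurable_bounded_integrable => //.
  - by rewrite (le_lt_trans (probability_le1 P measurableT)) ?ltry.
  - exact/measurableT_comp/random_matrix_measurable.
  - by exists k; split => // l kl w _; exact: fk.
have pushY := integral_pushforward (random_matrix_measurable rY) mfE (intf _ rY) measurableT.
have pushZ := integral_pushforward (random_matrix_measurable rZ) mfE (intf _ rZ) measurableT.
rewrite !preimage_setT in pushY pushZ.
rewrite /Rintegral -pushY -pushZ; congr fine.
apply: eq_measure_integral;
  [exact: random_matrix_measurable rZ | exact: random_matrix_measurable rY |].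
by move=> ? ? A mA _; exact: lawYZ.
Qed.

Lemma charfun_unitary_conj Y (U S : 'M[C]_N) :
  random_matrix Y -> eq_in_law P (fun w => U *m Y w *m adjmx U) Y ->
  charfun P Y (adjmx U *m S *m U) = charfun P Y S.
Proof.
move=> rY lawY.
have trE w : \tr (Y w *m (adjmx U *m S *m U)) = \tr (U *m Y w *m adjmx U *m S).
  by rewrite -!mulmxA [RHS]mxtrace_mulC !mulmxA.
have inv (h : R -> R) : continuous h -> (forall t, `|h t| <= 1) ->
    Rintegral P setT (fun w => h (Re (\tr (Y w *m (adjmx U *m S *m U))))) =
    Rintegral P setT (fun w => h (Re (\tr (Y w *m S)))).
  move=> ch hb; under eq_fun do rewrite trE.
  apply: (eq_in_law_Rintegral (f := fun M => h (Re (\tr (M *m S))))) => //.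
  - exact: random_matrix_mulmx.
  - exact: measurable_trace_mulmx.
  - by exists 1; split => // l l1 M _; exact: le_trans (hb _) (ltW l1).
rewrite /charfun inv ?inv //;
  solve [exact: continuous_cos | exact: cos_max | exact: continuous_sin | exact: sin_max].
Qed.

End Law.

Section StableCharfun.
Variable R : realType.

Lemma polar_inj (r r' x y x' y' : R) : 0 < r -> 0 < r' ->
  x ^+ 2 + y ^+ 2 = 1 -> x' ^+ 2 + y' ^+ 2 = 1 ->
  (r * x) +i* (r * y) = (r' * x') +i* (r' * y') -> [/\ r = r', x = x' & y = y'].
Proof.
move=> r0 r'0 xy1 x'y'1 [ex ey].
have r2 : r ^+ 2 = r' ^+ 2.
  have -> : r ^+ 2 = (r * x) ^+ 2 + (r * y) ^+ 2 by rewrite !exprMn -mulrDr xy1 mulr1.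
  by rewrite ex ey !exprMn -mulrDr x'y'1 mulr1.
have rr' : r = r' by apply/eqP; rewrite -(@eqrXn2 _ 2) ?ltW // r2.
by subst r'; split => //; apply: (mulfI (lt0r_neq0 r0)).
Qed.

Lemma phase_dilation_inj (t t' : R) :
  (forall l, cos (l * t) = cos (l * t') /\ sin (l * t) = sin (l * t')) -> t = t'.
Proof.
move=> eq_cs; apply/eqP/negPn/negP => tt'.
have := eq_cs (pi / 2 / (t - t')) => -[ec es].
have := sinB (pi / 2 / (t - t') * t) (pi / 2 / (t - t') * t').
rewrite ec es [sin _ * _]mulrC subrr -mulrBr divfK ?subr_eq0 // sin_pihalf.
by move/eqP; rewrite oner_eq0.
Qed.

Variables (N : nat) (alpha : R) (Sigma : 'M[R[i]]_(N * N)) (Y0 : 'M[R[i]]_N).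
Hypotheses (alpha_gt0 : 0 < alpha) (Sigma_posdef : herm_posdef Sigma).

Lemma stable_charfun_dilation_inj (S S' : 'M[R[i]]_N) :
  (forall l : R, stable_charfun alpha Sigma Y0 (l%:C *: S) =
                 stable_charfun alpha Sigma Y0 (l%:C *: S')) ->
  Re (sigma_form Sigma S) = Re (sigma_form Sigma S') /\
  Re (\tr (Y0 *m S)) = Re (\tr (Y0 *m S')).
Proof.
move=> eqF.
have polar l := polar_inj (expR_gt0 _) (expR_gt0 _) (cos2Dsin2 _) (cos2Dsin2 _) (eqF l).
have trZ l (A : 'M[R[i]]_N) : Re (\tr (Y0 *m (l%:C *: A))) = l * Re (\tr (Y0 *m A)).
  by rewrite -scalemxAr mxtraceZ Re_realCM.
split.
- have [+ _ _] := polar 1; rewrite !sigma_formZ !Re_realCM expr1n !mul1r.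
  move/expR_inj/oppr_inj; apply: powR_injective; rewrite ?divr_gt0 //;
    by rewrite nnegrE Re_sigma_form_ge0.
- apply: phase_dilation_inj => l; have [_ ec es] := polar l.
  by rewrite !trZ in ec es.
Qed.

Hypothesis stable_charfun_unitary : forall U S, unitary_mx U -> herm_mx S ->
  stable_charfun alpha Sigma Y0 (adjmx U *m S *m U) = stable_charfun alpha Sigma Y0 S.

Lemma unitary_invariant_of_stable_charfun U S : unitary_mx U -> herm_mx S ->
  Re (sigma_form Sigma (adjmx U *m S *m U)) = Re (sigma_form Sigma S) /\
  Re (\tr (Y0 *m (adjmx U *m S *m U))) = Re (\tr (Y0 *m S)).
Proof.
move=> hU hS; apply: stable_charfun_dilation_inj => l.
by rewrite -(stable_charfun_unitary hU (herm_mx_realZ l hS)) -scalemxAr -scalemxAl.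
Qed.

End StableCharfun.

Theorem lemma4p3 (R : realType) (N : nat) (alpha : R)
  (Sigma : 'M[R[i]]_(N * N)) (Y0 : 'M[R[i]]_N)
  (d : measure_display) (Omega : measurableType d) (P : probability Omega R)
  (Y : Omega -> 'M[R[i]]_N) :
  (0 < N)%N ->
  0 < alpha <= 2 ->
  herm_mx Y0 ->
  herm_posdef Sigma ->
  random_matrix Y ->
  (forall w, herm_mx (Y w)) ->
  (forall S : 'M[R[i]]_N, herm_mx S ->
     charfun P Y S = stable_charfun alpha Sigma Y0 S) ->
  (forall U : 'M[R[i]]_N, unitary_mx U ->
     eq_in_law P (fun w => U *m Y w *m adjmx U) Y) ->
  (exists sigma kappa : R, 0 < sigma /\ - sigma ^+ 2 / N%:R < kappa /\
     forall S : 'M[R[i]]_N, herm_mx S ->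
       sigma_form Sigma S =
         ((sigma ^+ 2 / alpha)%:C * \tr (S *m S)
          + (kappa / alpha)%:C * (\tr S) ^+ 2)%R) /\
  (exists y0 : R, Y0 = (y0%:C)%:M).
Proof.
(* alpha <= 2 and the Hermitian values of Y are needed for such a law to
   exist, not for the conclusion. *)
move=> N_gt0 /andP[alpha_gt0 _] hY0 Sigma_pd rY _ charY lawY.
have stable_inv U S : unitary_mx U -> herm_mx S ->
    stable_charfun alpha Sigma Y0 (adjmx U *m S *m U) = stable_charfun alpha Sigma Y0 S.
  move=> hU hS; rewrite -(charY _ (herm_mx_conj U hS)) -(charY _ hS).
  exact: charfun_unitary_conj (lawY _ hU).
have parts := unitary_invariant_of_stable_charfun alpha_gt0 Sigma_pd stable_inv.
split; last first.
  by apply: trace_invariant_herm_scalar => // U S hU hS; case: (parts U S hU hS).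
have [p [r [p_gt0 pNr_gt0 sigmaE]]] := unitary_invariant_sigma_form Sigma_pd N_gt0
  (fun U S hU hS => (parts U S hU hS).1).
have alpha_neq0 : alpha != 0 by rewrite gt_eqF.
exists (Num.sqrt (alpha * p)), (alpha * r).
rewrite sqr_sqrtr ?mulr_ge0 ?ltW // sqrtr_gt0 mulr_gt0 //; split => //; split.
  have -> : - (alpha * p) / N%:R = alpha * r - alpha * (p + N%:R * r) / N%:R.
    by field; rewrite pnatr_eq0 -lt0n.
  by rewrite gtrBl divr_gt0 ?mulr_gt0 ?ltr0n.
by move=> S hS; rewrite sigmaE // ![alpha * _ / alpha]mulrAC divff // !mul1r.
Qed.
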